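(* For $r\ge1$ and $x\in\mathbb Z^2$ with $\|x\|\ge r+1$, $$\widehat P_x\big[\widehat\tau_1(B(r))=\infty\big]=1-\frac{a(r)+O(r^{-1})}{a(x)}.$$
   Context: Let $(S_k)_{k\ge 0}$ be simple random walk on $\mathbb Z^2$ and $P_x$ its law when $S_0=x$. Write $\|\cdot\|$ for the Euclidean norm, $y\sim x$ for nearest neighbours, $B(r)=\{y\in\mathbb Z^2:\|y\|\le r\}$. The potential kernel is $a(x)=\sum_{k\ge0}(P_0[S_k=0]-P_x[S_k=0])$; it satisfies $a(0)=0$, $a(x)>0$ for $x\ne0$, $\frac14\sum_{y\sim x}a(y)=a(x)$ for $x\neq 0$, and $a(x)=\frac2\pi\ln\|x\|+\gamma'+O(\|x\|^{-2})$ for a constant $\gamma'$. For real $r\ge1$ set $a(r)=\frac2\pi\ln r+\gamma'$. The conditioned walk $(\widehat S_k)_{k\ge0}$ is the Markov chain on $\mathbb Z^2\setminus\{0\}$ with transition probabilities $p(x,y)=\frac{a(y)}{4a(x)}$ for $y\sim x$ (and $0$ otherwise); it is transient. $\widehat P_x$ denotes its law started at $x\ne0$, and $\widehat\tau_1(A)=\inf\{k\ge1:\widehat S_k\in A\}$. $O(r^{-1})$ denotes a quantity bounded in absolute value by a universal constant times $r^{-1}$. *)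

From Stdlib Require Import Reals Lra ZArith.
Open Scope R_scope.

Definition pt := (Z * Z)%type.

Definition pt_eq_dec (x y : pt) : {x = y} + {x <> y}.
Proof. decide equality; apply Z.eq_dec. Defined.

Definition norm (x : pt) : R := sqrt (IZR (fst x) ^ 2 + IZR (snd x) ^ 2).

Definition nb_sum (f : pt -> R) (x : pt) : R :=
  f ((fst x + 1)%Z, snd x) + f ((fst x - 1)%Z, snd x)
  + f (fst x, (snd x + 1)%Z) + f (fst x, (snd x - 1)%Z).

(* srw k x y = P_x[S_k = y] for simple random walk on Z^2 *)
Fixpoint srw (k : nat) (x y : pt) : R :=
  match k with
  | O => if pt_eq_dec x y then 1 else 0
  | S k' => / 4 * nb_sum (fun z => srw k' z y) x
  end.

Definition is_potential_kernel (a : pt -> R) : Prop :=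
  forall x : pt,
    infinite_sum (fun k => srw k (0%Z, 0%Z) (0%Z, 0%Z) - srw k x (0%Z, 0%Z)) (a x).

Definition is_gamma' (a : pt -> R) (g : R) : Prop :=
  exists C : R, forall x : pt, x <> (0%Z, 0%Z) ->
    Rabs (a x - (2 / PI * ln (norm x) + g)) <= C / (norm x ^ 2).

Definition a_real (g r : R) : R := 2 / PI * ln r + g.

(* hit_le a r n x = \hat P_x[\hat tau_1(B(r)) <= n], for the conditioned walk
   with transition probabilities p(x,y) = a(y)/(4 a(x)), y ~ x.  *)
Fixpoint hit_le (a : pt -> R) (r : R) (n : nat) (x : pt) : R :=
  match n with
  | O => 0
  | S n' => nb_sum (fun y => a y / (4 * a x) *
              (if Rle_dec (norm y) r then 1 else hit_le a r n' y)) x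
  end.

From Stdlib Require Import Reals Lra Lia ZArith List.
Open Scope R_scope.

(* The conditioned walk is Doob's h-transform of simple random walk by the
   potential kernel [a], which is harmonic and positive off the origin.  Hence,
   if τ is the entrance time of B(r) and x lies outside B(r),
     a(x) \hat E_x[1 / a(\hat S_τ); τ <= n] = P_x[τ <= n],
   and the right-hand side tends to 1 because simple random walk is recurrent:
   the mass of the walk killed on B(r) that sits in a finite box vanishes since
   P_x[S_n = y] -> 0, while far out [a] is large although the killed walk's
   mean of [a] stays below a(x).  As \hat S_τ lies in the annulus
   r - 1 < |y| <= r, where a(y) = a(r) + O(1/r), this gives
   a(x) \hat P_x[τ < ∞] = a(r) + O(1/r). *)

Notation origin := (0%Z, 0%Z).

Lemma Rabs_le_bounds z b : Rabs z <= b -> - b <= z <= b.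
Proof.
  intro H. pose proof (Rle_abs z). pose proof (Rle_abs (- z)). rewrite Rabs_Ropp in *. lra.
Qed.

Lemma ln_le_ln x y : 0 < x -> x <= y -> ln x <= ln y.
Proof. intros Hx [Hxy | <-]; [left; apply ln_increasing | right]; auto. Qed.

Lemma ln_le_sub_1 x : 0 < x -> ln x <= x - 1.
Proof.
  intro Hx. rewrite <- (ln_exp (x - 1)). apply ln_le_ln; [exact Hx|].
  pose proof (exp_ineq1_le (x - 1)). lra.
Qed.

Lemma sqrt_le_of_le_square A B : 0 <= B -> A <= B * B -> sqrt A <= B.
Proof.
  intros HB H. rewrite <- (sqrt_square B) by exact HB. apply sqrt_le_1_alt; exact H.
Qed.

Lemma Rabs_le_sqrt_sum_sq u v : Rabs u <= sqrt (u ^ 2 + v ^ 2).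
Proof. rewrite <- sqrt_Rsqr_abs. apply sqrt_le_1_alt. unfold Rsqr. nra. Qed.

Lemma sqrt_shift_le u v d :
  d * d = 1 -> sqrt ((u + d) ^ 2 + v ^ 2) <= sqrt (u ^ 2 + v ^ 2) + 1.
Proof.
  intro Hd.
  assert (Hd1 : Rabs d = 1).
  { assert (Rabs d * Rabs d = 1) by (rewrite <- Rabs_mult, Hd; apply Rabs_R1).
    pose proof (Rabs_pos d). nra. }
  assert (Hud : u * d <= Rabs u).
  { rewrite <- (Rmult_1_r (Rabs u)), <- Hd1, <- Rabs_mult. apply Rle_abs. }
  pose proof (sqrt_pos (u ^ 2 + v ^ 2)).
  pose proof (sqrt_sqrt (u ^ 2 + v ^ 2) ltac:(nra)).
  pose proof (Rabs_le_sqrt_sum_sq u v).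
  apply sqrt_le_of_le_square; nra.
Qed.

Lemma sqrt_shift_bounds u v d : d * d = 1 ->
  sqrt ((u + d) ^ 2 + v ^ 2) <= sqrt (u ^ 2 + v ^ 2) + 1 /\
  sqrt (u ^ 2 + v ^ 2) <= sqrt ((u + d) ^ 2 + v ^ 2) + 1.
Proof.
  intro Hd. split; [now apply sqrt_shift_le|].
  replace u with (u + d + - d) at 1 by ring. apply sqrt_shift_le. nra.
Qed.

Lemma Un_cv_const c : Un_cv (fun _ => c) c.
Proof. intros eps Heps. exists 0%nat. intros. unfold Rdist. rewrite Rminus_diag, Rabs_R0. lra. Qed.

Lemma Un_cv_succ u l : Un_cv u l -> Un_cv (fun n => u (S n)) l.
Proof.
  intros H eps Heps. destruct (H eps Heps) as [N HN]. exists N. intros n Hn. apply HN. lia.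
Qed.

Lemma Un_cv_squeeze_0 u v : (forall n, 0 <= u n <= v n) -> Un_cv v 0 -> Un_cv u 0.
Proof.
  intros H Hv eps Heps. destruct (Hv eps Heps) as [N HN]. exists N. intros n Hn.
  specialize (HN n Hn). specialize (H n). unfold Rdist in *. rewrite Rminus_0_r in *.
  rewrite Rabs_right in * by lra. lra.
Qed.

Lemma Un_cv_Rabs_le u l b : Un_cv u l -> (forall n, Rabs (u n) <= b) -> Rabs l <= b.
Proof.
  intros Hu H.
  assert (Hb : forall n, - b <= u n <= b) by (intro n; apply Rabs_le_bounds, H).
  apply Rabs_le. split;
    [apply (@Rle_cv_lim (fun _ => - b) u) | apply (@Rle_cv_lim u (fun _ => b))];
    auto using Un_cv_const; intro n; apply Hb.
Qed.

Lemma infinite_sum_terms_cv0 f l : infinite_sum f l -> Un_cv f 0.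
Proof.
  intros H eps Heps. destruct (H (eps / 2)) as [N HN]; [lra|].
  exists (S N). intros [|n] Hn; [lia|].
  pose proof (HN (S n) ltac:(lia)) as A. pose proof (HN n ltac:(lia)) as B.
  unfold Rdist in *. simpl in A. rewrite Rminus_0_r.
  replace (f (S n)) with ((sum_f_R0 f n + f (S n) - l) - (sum_f_R0 f n - l)) by ring.
  eapply Rle_lt_trans; [apply Rabs_triang|]. rewrite Rabs_Ropp. lra.
Qed.

Lemma norm_origin : norm origin = 0.
Proof. unfold norm; simpl. replace (0 * (0 * 1) + 0 * (0 * 1)) with 0 by ring. apply sqrt_0. Qed.

Lemma neq_origin_of_norm_pos x : 0 < norm x -> x <> origin.
Proof. intros H ->. rewrite norm_origin in H. lra. Qed.

Lemma Rabs_fst_le_norm x : Rabs (IZR (fst x)) <= norm x.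
Proof. apply Rabs_le_sqrt_sum_sq. Qed.

Lemma Rabs_snd_le_norm x : Rabs (IZR (snd x)) <= norm x.
Proof. unfold norm. rewrite Rplus_comm. apply Rabs_le_sqrt_sum_sq. Qed.

Lemma norm_ge_1 x : x <> origin -> 1 <= norm x.
Proof.
  destruct x as [u v]; intro H.
  destruct (Z.eq_dec u 0) as [-> | Hu].
  - apply Rle_trans with (2 := Rabs_snd_le_norm (0%Z, v)); simpl.
    rewrite <- abs_IZR. apply IZR_le. assert (v <> 0%Z) by congruence. lia.
  - apply Rle_trans with (2 := Rabs_fst_le_norm (u, v)); simpl.
    rewrite <- abs_IZR. apply IZR_le. lia.
Qed.

Definition nbr (x y : pt) : Prop :=
  y = ((fst x + 1)%Z, snd x) \/ y = ((fst x - 1)%Z, snd x) \/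
  y = (fst x, (snd x + 1)%Z) \/ y = (fst x, (snd x - 1)%Z).

Lemma norm_nbr x y : nbr x y -> norm y <= norm x + 1 /\ norm x <= norm y + 1.
Proof.
  destruct x as [u v]; unfold nbr, norm; simpl.
  intros [-> | [-> | [-> | ->]]]; simpl; rewrite ?plus_IZR, ?minus_IZR; unfold Rminus;
    [| | rewrite !(Rplus_comm (IZR u ^ 2)) ..]; apply sqrt_shift_bounds; lra.
Qed.

Lemma nb_sum_ext f h x : (forall y, nbr x y -> f y = h y) -> nb_sum f x = nb_sum h x.
Proof. intro H. unfold nb_sum, nbr in *. rewrite !H by auto. reflexivity. Qed.

Lemma nb_sum_le f h x : (forall y, nbr x y -> f y <= h y) -> nb_sum f x <= nb_sum h x.
Proof. intro H. unfold nb_sum, nbr in *. repeat apply Rplus_le_compat; apply H; auto. Qed.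

Lemma nb_sum_plus f h x : nb_sum (fun y => f y + h y) x = nb_sum f x + nb_sum h x.
Proof. unfold nb_sum; ring. Qed.

Lemma nb_sum_scal c f x : nb_sum (fun y => c * f y) x = c * nb_sum f x.
Proof. unfold nb_sum; ring. Qed.

Lemma nb_sum_const c x : nb_sum (fun _ => c) x = 4 * c.
Proof. unfold nb_sum; ring. Qed.

Lemma nb_sum_cv (F : nat -> pt -> R) f x :
  (forall y, Un_cv (fun n => F n y) (f y)) -> Un_cv (fun n => nb_sum (F n) x) (nb_sum f x).
Proof. intro H. unfold nb_sum. repeat apply CV_plus; apply H. Qed.

Definition Zrange (N : Z) : list Z :=
  map (fun k => (Z.of_nat k - N)%Z) (seq 0 (Z.to_nat (2 * N + 1))).

Definition box (N : Z) : list pt := list_prod (Zrange N) (Zrange N).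

Lemma In_Zrange N u : (Z.abs u <= N)%Z -> In u (Zrange N).
Proof.
  intro H. apply in_map_iff. exists (Z.to_nat (u + N)). split; [lia|]. apply in_seq. lia.
Qed.

Lemma In_box_of_norm_lt R N y : R <= IZR N -> norm y < R -> In y (box N).
Proof.
  intros HN Hy. destruct y as [u v].
  pose proof (Rabs_fst_le_norm (u, v)). pose proof (Rabs_snd_le_norm (u, v)).
  simpl in *. rewrite <- abs_IZR in *.
  apply in_prod; apply In_Zrange, le_IZR; lra.
Qed.

Lemma list_min_exists {A : Type} (f : A -> R) (l : list A) x0 :
  In x0 l -> exists z, In z l /\ forall w, In w l -> f z <= f w.
Proof.
  revert x0. induction l as [|x l IH]; intros x0 Hx0; [destruct Hx0|].
  destruct l as [|y l].
  - exists x. split; [now left|]. intros w [<- | []]. lra.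
  - destruct (IH y (or_introl eq_refl)) as [z [Hz Hmin]].
    destruct (Rle_dec (f x) (f z)).
    + exists x. split; [now left|]. intros w [<- | Hw]; [lra|]. specialize (Hmin w Hw). lra.
    + exists z. split; [now right|]. intros w [<- | Hw]; [lra | auto].
Qed.

Definition list_count (l : list pt) (y : pt) : R :=
  fold_right (fun z acc => (if pt_eq_dec y z then 1 else 0) + acc) 0 l.

Lemma list_count_nonneg l y : 0 <= list_count l y.
Proof. induction l as [|z l IH]; simpl; [lra|]. destruct pt_eq_dec; lra. Qed.

Lemma list_count_ge_1 l y : In y l -> 1 <= list_count l y.
Proof.
  induction l as [|z l IH]; [intros []|]. intros Hy. simpl.
  pose proof (list_count_nonneg l y).
  destruct pt_eq_dec as [|Hne]; [lra|].
  destruct Hy as [-> | Hy]; [congruence|]. specialize (IH Hy). lra.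
Qed.

Lemma srw_nonneg n : forall x y, 0 <= srw n x y.
Proof.
  induction n as [|n IH]; intros x y; simpl.
  - destruct pt_eq_dec; lra.
  - apply Rmult_le_pos; [lra|]. unfold nb_sum. repeat apply Rplus_le_le_0_compat; apply IH.
Qed.

Lemma srw_nbr_le n x z y : nbr x z -> srw n z y <= 4 * srw (S n) x y.
Proof.
  intro Hz. simpl. unfold nb_sum.
  pose proof (srw_nonneg n ((fst x + 1)%Z, snd x) y).
  pose proof (srw_nonneg n ((fst x - 1)%Z, snd x) y).
  pose proof (srw_nonneg n (fst x, (snd x + 1)%Z) y).
  pose proof (srw_nonneg n (fst x, (snd x - 1)%Z) y).
  destruct Hz as [-> | [-> | [-> | ->]]]; lra.
Qed.

(* Parity: the walk changes [fst + snd] by one at each step. *)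
Lemma srw_odd_origin n : forall x k,
  (fst x + snd x + Z.of_nat n = 2 * k + 1)%Z -> srw n x origin = 0.
Proof.
  induction n as [|n IH]; intros [u v] k H; cbn [srw fst snd] in *.
  - destruct pt_eq_dec as [E|]; [exfalso; injection E; lia | reflexivity].
  - unfold nb_sum; cbn [fst snd].
    rewrite (IH _ k), (IH _ (k - 1)%Z), (IH _ k), (IH _ (k - 1)%Z) by (cbn [fst snd]; lia). ring.
Qed.

Lemma srw_translate n : forall x y,
  srw n x y = srw n ((fst x - fst y)%Z, (snd x - snd y)%Z) origin.
Proof.
  induction n as [|n IH]; intros [u v] [s t]; cbn [srw fst snd].
  - destruct (pt_eq_dec (u, v) (s, t)) as [E|E];
      destruct (pt_eq_dec ((u - s)%Z, (v - t)%Z) origin) as [F|F]; auto;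
      exfalso; [apply F; injection E | apply E; injection F]; intros; f_equal; lia.
  - unfold nb_sum; cbn [fst snd].
    rewrite (IH (_, v)), (IH (_, v)), (IH (u, _)), (IH (u, _)); cbn [fst snd].
    replace (u + 1 - s)%Z with (u - s + 1)%Z by lia.
    replace (u - 1 - s)%Z with (u - s - 1)%Z by lia.
    replace (v + 1 - t)%Z with (v - t + 1)%Z by lia.
    replace (v - 1 - t)%Z with (v - t - 1)%Z by lia.
    reflexivity.
Qed.

(* [killed_mean r f n x] is E_x[f(S_n); n < τ], where τ >= 1 is the first positive
   time at which simple random walk is in B(r). *)
Fixpoint killed_mean (r : R) (f : pt -> R) (n : nat) (x : pt) : R :=
  match n with
  | O => f x
  | S n' => / 4 * nb_sum (fun y => if Rle_dec (norm y) r then 0 else killed_mean r f n' y) x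
  end.

Lemma killed_mean_le r f h : (forall y, f y <= h y) ->
  forall n x, killed_mean r f n x <= killed_mean r h n x.
Proof.
  intros H n. induction n as [|n IH]; intro x; simpl; auto.
  apply Rmult_le_compat_l; [lra|]. apply nb_sum_le. intros y _. destruct Rle_dec; [lra | auto].
Qed.

Lemma killed_mean_zero r : forall n x, killed_mean r (fun _ => 0) n x = 0.
Proof.
  induction n as [|n IH]; intro x; simpl; auto.
  rewrite (nb_sum_ext _ (fun _ => 0)) by (intros y _; destruct Rle_dec; auto).
  rewrite nb_sum_const. ring.
Qed.

Lemma killed_mean_nonneg r f : (forall y, 0 <= f y) -> forall n x, 0 <= killed_mean r f n x.
Proof. intros H n x. rewrite <- (killed_mean_zero r n x). now apply killed_mean_le. Qed.

Lemma killed_mean_plus r f h : forall n x,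
  killed_mean r (fun y => f y + h y) n x = killed_mean r f n x + killed_mean r h n x.
Proof.
  induction n as [|n IH]; intro x; simpl; auto.
  rewrite <- Rmult_plus_distr_l, <- nb_sum_plus. f_equal. apply nb_sum_ext. intros y _.
  destruct Rle_dec; [ring | auto].
Qed.

Lemma killed_mean_scal r c f : forall n x,
  killed_mean r (fun y => c * f y) n x = c * killed_mean r f n x.
Proof.
  induction n as [|n IH]; intro x; simpl; auto.
  rewrite (nb_sum_ext _ (fun y => c * (if Rle_dec (norm y) r then 0 else killed_mean r f n y)))
    by (intros y _; destruct Rle_dec; [ring | auto]).
  rewrite nb_sum_scal. ring.
Qed.

Lemma killed_mean_point_le_srw r z : forall n x,
  killed_mean r (fun y => if pt_eq_dec y z then 1 else 0) n x <= srw n x z.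
Proof.
  induction n as [|n IH]; intro x; simpl; [lra|].
  apply Rmult_le_compat_l; [lra|]. apply nb_sum_le. intros y _.
  destruct Rle_dec; [apply srw_nonneg | apply IH].
Qed.

(* [cond_mean a r phi n x] is \hat E_x[phi(\hat S_τ); τ <= n] for the conditioned walk;
   [hit_le] is the case [phi = 1]. *)
Fixpoint cond_mean (a : pt -> R) (r : R) (phi : pt -> R) (n : nat) (x : pt) : R :=
  match n with
  | O => 0
  | S n' => nb_sum (fun y => a y / (4 * a x) *
              (if Rle_dec (norm y) r then phi y else cond_mean a r phi n' y)) x
  end.

Lemma hit_le_eq_cond_mean a r : forall n x, hit_le a r n x = cond_mean a r (fun _ => 1) n x.
Proof.
  induction n as [|n IH]; intro x; simpl; auto.
  apply nb_sum_ext. intros y _. destruct Rle_dec; [reflexivity | rewrite IH; reflexivity].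
Qed.

Lemma cond_mean_plus a r f h : forall n x,
  cond_mean a r (fun y => f y + h y) n x = cond_mean a r f n x + cond_mean a r h n x.
Proof.
  induction n as [|n IH]; intro x; simpl; [ring|].
  rewrite <- nb_sum_plus. apply nb_sum_ext. intros y _. destruct Rle_dec; [ring|]. rewrite IH. ring.
Qed.

Lemma cond_mean_scal a r c f : forall n x,
  cond_mean a r (fun y => c * f y) n x = c * cond_mean a r f n x.
Proof.
  induction n as [|n IH]; intro x; simpl; [ring|].
  rewrite <- nb_sum_scal. apply nb_sum_ext. intros y _. destruct Rle_dec; [ring|]. rewrite IH. ring.
Qed.

Section Potential_kernel.

Variable a : pt -> R.
Variable g : R.
Hypothesis Ha : is_potential_kernel a.
Hypothesis Hg : is_gamma' a g.

Lemma srw_return_cv0 : Un_cv (fun n => srw n origin origin) 0.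
Proof.
  intros eps Heps.
  destruct (infinite_sum_terms_cv0 _ _ (Ha (1%Z, 0%Z)) (eps / 4)) as [N HN]; [lra|].
  exists N. intros n Hn. unfold Rdist.
  rewrite Rminus_0_r, Rabs_right by (apply Rle_ge, srw_nonneg).
  destruct (Nat.Even_or_Odd n) as [[m Hm] | [m Hm]].
  - (* For even [n], the origin is unreachable at time [n + 1], so the [(n + 1)]-th term
       of the series defining [a (1, 0)] is [- srw (S n) (1, 0) origin]. *)
    assert (Hstep : srw n origin origin <= 4 * srw (S n) (1%Z, 0%Z) origin)
      by (apply srw_nbr_le; unfold nbr; simpl; auto).
    assert (Hodd : srw (S n) origin origin = 0)
      by (apply (srw_odd_origin _ _ (Z.of_nat m)); cbn [fst snd]; lia).
    specialize (HN (S n) ltac:(lia)). unfold Rdist in HN.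
    rewrite Hodd, Rminus_0_r, Rminus_0_l, Rabs_Ropp, Rabs_right in HN
      by (apply Rle_ge, srw_nonneg).
    lra.
  - rewrite (srw_odd_origin _ _ (Z.of_nat m)) by (cbn [fst snd]; lia). lra.
Qed.

Lemma srw_cv0 x y : Un_cv (fun n => srw n x y) 0.
Proof.
  apply Un_cv_ext with (fun n => srw n ((fst x - fst y)%Z, (snd x - snd y)%Z) origin);
    [intro n; symmetry; apply srw_translate|].
  set (z := ((fst x - fst y)%Z, (snd x - snd y)%Z)).
  apply Un_cv_ext with (fun n => srw n origin origin - (srw n origin origin - srw n z origin));
    [intro n; ring|].
  rewrite <- (Rminus_0_r 0) at 1.
  apply CV_minus; [apply srw_return_cv0 | exact (infinite_sum_terms_cv0 _ _ (Ha z))].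
Qed.

Lemma a_origin : a origin = 0.
Proof.
  apply (uniqueness_sum (fun k => srw k origin origin - srw k origin origin)); [apply Ha|].
  apply Un_cv_ext with (fun _ => 0); [|apply Un_cv_const].
  intro n. induction n as [|n IH]; simpl; [|rewrite <- IH]; ring.
Qed.

Definition potential_partial (x : pt) (n : nat) : R :=
  sum_f_R0 (fun k => srw k origin origin - srw k x origin) n.

Lemma potential_partial_mean_value x n : x <> origin ->
  potential_partial x (S n) - srw (S n) origin origin
  = / 4 * nb_sum (fun y => potential_partial y n) x.
Proof.
  intro Hx. unfold potential_partial. induction n as [|n IH].
  - simpl. destruct pt_eq_dec; [contradiction|]. unfold nb_sum. field.
  - cbn [sum_f_R0 srw] in *. unfold nb_sum in *. lra.
Qed.

Lemma a_harmonic x : x <> origin -> nb_sum a x = 4 * a x.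
Proof.
  intro Hx.
  assert (Hleft : Un_cv (fun n => potential_partial x (S n) - srw (S n) origin origin) (a x - 0))
    by (apply CV_minus; [apply (Un_cv_succ (potential_partial x)), Ha
                        | apply (Un_cv_succ (fun n => srw n origin origin)), srw_return_cv0]).
  assert (Hright : Un_cv (fun n => / 4 * nb_sum (fun y => potential_partial y n) x)
                         (/ 4 * nb_sum a x))
    by (apply CV_mult; [apply Un_cv_const | apply nb_sum_cv; intro y; apply Ha]).
  apply Un_cv_ext with (1 := fun n => potential_partial_mean_value x n Hx) in Hleft.
  pose proof (UL_sequence _ _ _ Hleft Hright). lra.
Qed.

Lemma a_eventually_ge M : exists R, 1 <= R /\ forall y, R <= norm y -> M <= a y.
Proof.
  destruct Hg as [C HC].
  set (T := (M - g + Rabs C) * (PI / 2)).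
  exists (Rmax 1 (exp T)). split; [apply Rmax_l|].
  intros y Hy.
  assert (Hy1 : 1 <= norm y) by (eapply Rle_trans; [apply Rmax_l | exact Hy]).
  specialize (HC y (neq_origin_of_norm_pos y ltac:(lra))). apply Rabs_le_bounds in HC.
  assert (HT : T <= ln (norm y)).
  { rewrite <- (ln_exp T). apply ln_le_ln; [apply exp_pos|].
    eapply Rle_trans; [apply Rmax_r | exact Hy]. }
  assert (Herr : C / norm y ^ 2 <= Rabs C).
  { assert (Hq : 0 < / norm y ^ 2 <= 1).
    { split; [apply Rinv_0_lt_compat; nra|]. rewrite <- Rinv_1. apply Rinv_le_contravar; nra. }
    pose proof (Rle_abs C). pose proof (Rabs_pos C). unfold Rdiv. nra. }
  assert (HPI := PI_RGT_0).
  assert (2 / PI * T <= 2 / PI * ln (norm y))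
    by (apply Rmult_le_compat_l; [left; apply Rdiv_lt_0_compat|]; lra).
  assert (2 / PI * T = M - g + Rabs C) by (unfold T; field; lra).
  lra.
Qed.

Lemma a_annulus_bound : exists K, 0 <= K /\
  forall r y, 1 <= r -> r - 1 < norm y <= r -> Rabs (a y - a_real g r) <= K / r.
Proof.
  destruct Hg as [C HC]. exists (2 + 2 * Rabs C). split; [pose proof (Rabs_pos C); lra|].
  intros r y Hr [Hy1 Hy2].
  assert (Hn : 1 <= norm y) by (apply norm_ge_1, neq_origin_of_norm_pos; lra).
  specialize (HC y (neq_origin_of_norm_pos y ltac:(lra))).
  set (n := norm y) in *. set (q := / n).
  assert (Hq : 0 < q <= 1) by
    (split; [apply Rinv_0_lt_compat | rewrite <- Rinv_1; apply Rinv_le_contravar]; lra).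
  assert (Hqr : q <= 2 / r).
  { apply Rle_trans with (/ (r / 2)); [apply Rinv_le_contravar; destruct (Rle_dec 2 r); lra|].
    right; field; lra. }
  assert (Hln : 0 <= ln r - ln n <= q).
  { split; [pose proof (ln_le_ln n r ltac:(lra) Hy2); lra|].
    replace (ln r - ln n) with (ln (r * q)) by (unfold q; rewrite ln_mult, ln_Rinv; try ring;
      try apply Rinv_0_lt_compat; lra).
    eapply Rle_trans; [apply ln_le_sub_1; apply Rmult_lt_0_compat; lra|].
    assert (r * q - 1 = (r - n) * q) by (unfold q; field; lra). nra. }
  assert (Herr : Rabs (a y - (2 / PI * ln n + g)) <= Rabs C * q).
  { eapply Rle_trans; [exact HC|]. replace (C / n ^ 2) with (C * q * q) by (unfold q; field; lra).
    assert (C * q <= Rabs C * q) by (apply Rmult_le_compat_r; [lra | apply Rle_abs]).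
    assert (0 <= Rabs C * q) by (apply Rmult_le_pos; [apply Rabs_pos | lra]).
    nra. }
  assert (HPI : 0 < 2 / PI < 1).
  { pose proof PI2_1. split; [apply Rdiv_lt_0_compat; lra|].
    replace (2 / PI) with (/ (PI / 2)) by (field; lra).
    rewrite <- Rinv_1. apply Rinv_lt_contravar; lra. }
  unfold a_real.
  replace (a y - (2 / PI * ln r + g))
    with ((a y - (2 / PI * ln n + g)) - 2 / PI * (ln r - ln n)) by ring.
  eapply Rle_trans; [apply Rabs_triang|].
  rewrite Rabs_Ropp, (Rabs_right (2 / PI * _)) by (apply Rle_ge, Rmult_le_pos; lra).
  pose proof (Rabs_pos C).
  replace ((2 + 2 * Rabs C) / r) with (2 / r + Rabs C * (2 / r)) by (field; lra).
  nra.
Qed.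

Lemma a_attains_min : exists z, forall w, a z <= a w.
Proof.
  destruct (a_eventually_ge (a origin)) as [R [HR1 HR]].
  assert (Hbox : forall y, norm y < R -> In y (box (up R)))
    by (intros y; apply In_box_of_norm_lt; left; apply archimed).
  destruct (list_min_exists a (box (up R)) origin) as [z [_ Hmin]];
    [apply Hbox; rewrite norm_origin; lra|].
  exists z. intro w. destruct (Rlt_dec (norm w) R) as [Hw | Hw]; [auto|].
  apply Rle_trans with (a origin); [apply Hmin, Hbox; rewrite norm_origin; lra | apply HR; lra].
Qed.

Lemma a_min_nbr x y : x <> origin -> (forall w, a x <= a w) -> nbr x y -> a y = a x.
Proof.
  intros Hx Hmin Hy. pose proof (a_harmonic x Hx) as Hh. unfold nb_sum, nbr in *.
  pose proof (Hmin ((fst x + 1)%Z, snd x)). pose proof (Hmin ((fst x - 1)%Z, snd x)).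
  pose proof (Hmin (fst x, (snd x + 1)%Z)). pose proof (Hmin (fst x, (snd x - 1)%Z)).
  destruct Hy as [-> | [-> | [-> | ->]]]; lra.
Qed.

(* Away from the origin the minimum propagates to all neighbours, hence along a ray
   going to infinity, where [a] is large. *)
Lemma a_min_at_origin y : (forall w, a y <= a w) -> y = origin.
Proof.
  destruct y as [u v]. intro Hmin.
  destruct (pt_eq_dec (u, v) origin) as [| Hy]; [assumption | exfalso].
  set (s := if Z_le_dec 0 u then 1%Z else (-1)%Z).
  assert (Hray : forall k : nat, ((u + s * Z.of_nat k)%Z, v) <> origin /\
                                 a ((u + s * Z.of_nat k)%Z, v) = a (u, v)).
  { induction k as [|k [Hne Heq]].
    - rewrite Z.mul_0_r, Z.add_0_r. auto.
    - split; [intro E; injection E; unfold s; destruct (Z_le_dec 0 u); lia|].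
      rewrite <- Heq. apply a_min_nbr; [exact Hne | rewrite Heq; exact Hmin|].
      unfold nbr, s; simpl. destruct (Z_le_dec 0 u); [left | right; left]; f_equal; lia. }
  destruct (a_eventually_ge (a (u, v) + 1)) as [R [HR1 HR]].
  set (k := Z.to_nat (up R + Z.abs u)).
  destruct (Hray k) as [_ Hk].
  assert (Hfar : R <= norm ((u + s * Z.of_nat k)%Z, v)).
  { apply Rle_trans with (2 := Rabs_fst_le_norm _). simpl. rewrite <- abs_IZR.
    pose proof (archimed R) as [HN _].
    apply Rle_trans with (IZR (up R)); [lra|]. apply IZR_le.
    assert (0 <= up R)%Z by (apply le_IZR; lra).
    unfold k, s. destruct (Z_le_dec 0 u); lia. }
  specialize (HR _ Hfar). lra.
Qed.

Lemma a_pos y : y <> origin -> 0 < a y.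
Proof.
  intro Hy. destruct a_attains_min as [z Hz].
  rewrite (a_min_at_origin z Hz), a_origin in Hz.
  apply Rnot_le_lt. intro Hle. apply Hy, a_min_at_origin.
  intro w. specialize (Hz w). lra.
Qed.

Lemma a_pos_of_norm_pos x : 0 < norm x -> 0 < a x.
Proof. intro Hx. apply a_pos, neq_origin_of_norm_pos, Hx. Qed.

Lemma a_nonneg y : 0 <= a y.
Proof.
  destruct (pt_eq_dec y origin) as [-> | Hy];
    [rewrite a_origin; lra | left; apply a_pos, Hy].
Qed.

Lemma killed_mean_a_le r : 0 <= r -> forall n x, r < norm x -> killed_mean r a n x <= a x.
Proof.
  intros Hr n. induction n as [|n IH]; intros x Hx; simpl; [lra|].
  rewrite <- (Rmult_1_l (a x)). replace 1 with (/ 4 * 4) by field.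
  rewrite Rmult_assoc, <- (a_harmonic x) by (apply neq_origin_of_norm_pos; lra).
  apply Rmult_le_compat_l; [lra|]. apply nb_sum_le. intros y _.
  destruct Rle_dec; [apply a_nonneg | apply IH; lra].
Qed.

Lemma killed_mean_count_cv0 r l x : Un_cv (fun n => killed_mean r (list_count l) n x) 0.
Proof.
  induction l as [|z l IH]; simpl.
  - apply Un_cv_ext with (fun _ => 0); [|apply Un_cv_const].
    intro n. symmetry. apply killed_mean_zero.
  - rewrite <- (Rplus_0_r 0).
    apply Un_cv_ext with (fun n => killed_mean r (fun y => if pt_eq_dec y z then 1 else 0) n x
                                   + killed_mean r (list_count l) n x);
      [intro n; symmetry; apply (killed_mean_plus r (fun y => if pt_eq_dec y z then 1 else 0)) |].
    apply CV_plus; [|exact IH].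
    apply Un_cv_squeeze_0 with (fun n => srw n x z); [|apply srw_cv0].
    intro n. split; [apply killed_mean_nonneg; intro; destruct pt_eq_dec; lra|].
    apply killed_mean_point_le_srw.
Qed.

Lemma killed_survival_cv0 r x : 0 <= r -> r < norm x ->
  Un_cv (fun n => killed_mean r (fun _ => 1) n x) 0.
Proof.
  intros Hr Hx eps Heps.
  assert (Hax : 0 < a x) by (apply a_pos_of_norm_pos; lra).
  set (c := eps / (2 * a x)).
  assert (Hc : 0 < c) by (unfold c; apply Rdiv_lt_0_compat; lra).
  destruct (a_eventually_ge (/ c)) as [R [_ HR]].
  set (l := box (up R)).
  assert (Hcover : forall y, 1 <= list_count l y + c * a y).
  { intro y. pose proof (list_count_nonneg l y). pose proof (a_nonneg y).
    destruct (Rlt_dec (norm y) R) as [Hy | Hy].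
    - assert (In y l) by (apply (In_box_of_norm_lt R); [left; apply archimed | exact Hy]).
      pose proof (list_count_ge_1 l y ltac:(assumption)). nra.
    - specialize (HR y ltac:(lra)).
      assert (c * / c <= c * a y) by (apply Rmult_le_compat_l; lra).
      rewrite Rinv_r in * by lra. lra. }
  destruct (killed_mean_count_cv0 r l x (eps / 2)) as [N HN]; [lra|].
  exists N. intros n Hn. specialize (HN n Hn). unfold Rdist in *. rewrite Rminus_0_r in *.
  pose proof (killed_mean_le r _ _ Hcover n x) as Hle.
  rewrite killed_mean_plus, killed_mean_scal in Hle.
  pose proof (killed_mean_a_le r Hr n x Hx).
  pose proof (killed_mean_nonneg r (fun _ => 1) ltac:(intro; lra) n x).
  pose proof (killed_mean_nonneg r (list_count l) (list_count_nonneg l) n x).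
  rewrite Rabs_right in * by lra.
  assert (c * killed_mean r a n x <= eps / 2).
  { apply Rle_trans with (c * a x); [apply Rmult_le_compat_l; lra | right; unfold c; field; lra]. }
  lra.
Qed.

Lemma transition_nonneg x y : 0 <= a y / (4 * a x).
Proof.
  unfold Rdiv. apply Rmult_le_pos; [apply a_nonneg|].
  destruct (a_nonneg x) as [H | H];
    [left; apply Rinv_0_lt_compat; lra | rewrite <- H, Rmult_0_r, Rinv_0; lra].
Qed.

Lemma cond_mean_le_on_entry r f h : (forall y, r - 1 < norm y <= r -> f y <= h y) ->
  forall n x, r < norm x -> cond_mean a r f n x <= cond_mean a r h n x.
Proof.
  intros H n. induction n as [|n IH]; intros x Hx; simpl; [lra|].
  apply nb_sum_le. intros y Hy. apply Rmult_le_compat_l; [apply transition_nonneg|].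
  destruct (norm_nbr x y Hy). destruct Rle_dec; [apply H | apply IH]; lra.
Qed.

Lemma cond_mean_Rabs_le r f h : (forall y, r - 1 < norm y <= r -> Rabs (f y) <= h y) ->
  forall n x, r < norm x -> Rabs (cond_mean a r f n x) <= cond_mean a r h n x.
Proof.
  intros H n x Hx. apply Rabs_le. split.
  - replace (- cond_mean a r h n x) with (cond_mean a r (fun y => -1 * h y) n x)
      by (rewrite cond_mean_scal; ring).
    apply cond_mean_le_on_entry; [|exact Hx].
    intros y Hy. destruct (Rabs_le_bounds _ _ (H y Hy)). lra.
  - apply cond_mean_le_on_entry; [|exact Hx].
    intros y Hy. destruct (Rabs_le_bounds _ _ (H y Hy)). lra.
Qed.

Lemma hit_le_growing r x : Un_growing (fun n => hit_le a r n x).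
Proof.
  intro n. revert x. induction n as [|n IH]; intro x.
  - simpl. replace 0 with (nb_sum (fun _ => 0) x) at 1 by (rewrite nb_sum_const; ring).
    apply nb_sum_le. intros y _.
    apply Rmult_le_pos; [apply transition_nonneg | destruct Rle_dec; lra].
  - change (hit_le a r (S n) x <= hit_le a r (S (S n)) x). simpl.
    apply nb_sum_le. intros y _. apply Rmult_le_compat_l; [apply transition_nonneg|].
    destruct Rle_dec; [lra | apply IH].
Qed.

Lemma hit_le_le_1 r : forall n x, hit_le a r n x <= 1.
Proof.
  induction n as [|n IH]; intro x; simpl; [lra|].
  destruct (pt_eq_dec x origin) as [-> | Hx].
  - (* All weights vanish: [a origin = 0] and [/ 0 = 0]. *)
    rewrite a_origin, Rmult_0_r.
    rewrite (nb_sum_ext _ (fun _ => 0)) by (intros y _; unfold Rdiv; rewrite Rinv_0; ring).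
    rewrite nb_sum_const. lra.
  - assert (Hax := a_pos x Hx).
    apply Rle_trans with (nb_sum (fun y => / (4 * a x) * a y) x).
    + apply nb_sum_le. intros y _. apply Rle_trans with (a y / (4 * a x) * 1).
      * apply Rmult_le_compat_l; [apply transition_nonneg | destruct Rle_dec; [lra | apply IH]].
      * right. unfold Rdiv. ring.
    + rewrite nb_sum_scal, (a_harmonic x Hx). right. field. lra.
Qed.

(* Doob's h-transform: weighted by [1 / a], the conditioned walk computes the
   probability that simple random walk has entered [B(r)] by time [n]. *)
Lemma a_mul_cond_mean_inv_a r : 1 <= r -> forall n x, r < norm x ->
  a x * cond_mean a r (fun y => / a y) n x = 1 - killed_mean r (fun _ => 1) n x.
Proof.
  intro Hr. induction n as [|n IH]; intros x Hx; simpl; [ring|].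
  assert (Hax : 0 < a x) by (apply a_pos_of_norm_pos; lra).
  rewrite <- nb_sum_scal.
  rewrite (nb_sum_ext _ (fun y => / 4 * (1 - if Rle_dec (norm y) r then 0
                                             else killed_mean r (fun _ => 1) n y))).
  - unfold nb_sum. field.
  - intros y Hy. destruct (norm_nbr x y Hy).
    assert (Hay : 0 < a y) by (apply a_pos_of_norm_pos; lra).
    destruct Rle_dec; [|rewrite <- IH by lra]; field; lra.
Qed.

Lemma cond_mean_inv_a_le r n x : 1 <= r -> r < norm x ->
  cond_mean a r (fun y => / a y) n x <= / a x.
Proof.
  intros Hr Hx.
  assert (Hax : 0 < a x) by (apply a_pos_of_norm_pos; lra).
  apply Rmult_le_reg_l with (a x); [exact Hax|].
  rewrite a_mul_cond_mean_inv_a, Rinv_r by lra.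
  pose proof (killed_mean_nonneg r (fun _ => 1) ltac:(intro; lra) n x). lra.
Qed.

Lemma cond_mean_inv_a_cv r x : 1 <= r -> r < norm x ->
  Un_cv (fun n => cond_mean a r (fun y => / a y) n x) (/ a x).
Proof.
  intros Hr Hx.
  assert (Hax : 0 < a x) by (apply a_pos_of_norm_pos; lra).
  apply Un_cv_ext with (fun n => / a x * (1 - killed_mean r (fun _ => 1) n x)).
  - intro n. rewrite <- a_mul_cond_mean_inv_a by assumption. field. lra.
  - pose proof (CV_mult _ _ _ _ (Un_cv_const (/ a x))
      (CV_minus _ _ _ _ (Un_cv_const 1) (killed_survival_cv0 r x ltac:(lra) Hx))) as Hcv.
    rewrite Rminus_0_r, Rmult_1_r in Hcv. exact Hcv.
Qed.

Lemma hit_le_cv r x : exists L, Un_cv (fun n => hit_le a r n x) L.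
Proof.
  destruct (growing_cv (fun n => hit_le a r n x)) as [L HL];
    [apply hit_le_growing | exists 1; intros z [n ->]; apply hit_le_le_1 | now exists L].
Qed.

Lemma hit_limit_close r x c K L : 1 <= r -> r < norm x -> 0 <= K ->
  (forall y, r - 1 < norm y <= r -> Rabs (a y - c) <= K) ->
  Un_cv (fun n => hit_le a r n x) L -> Rabs (a x * L - c) <= K.
Proof.
  intros Hr Hx HK Hc HL.
  assert (Hax : 0 < a x) by (apply a_pos_of_norm_pos; lra).
  set (v := fun n => cond_mean a r (fun y => / a y) n x).
  assert (Hdiff : forall n,
    hit_le a r n x - c * v n = cond_mean a r (fun y => 1 + - c * / a y) n x).
  { intro n. unfold v. rewrite cond_mean_plus, cond_mean_scal, hit_le_eq_cond_mean. ring. }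
  assert (Hbound : forall n, Rabs (hit_le a r n x - c * v n) <= K * / a x).
  { intro n. rewrite Hdiff. eapply Rle_trans.
    - apply (cond_mean_Rabs_le r _ (fun y => K * / a y)); [|exact Hx].
      intros y Hy.
      assert (Hay : 0 < a y) by (apply a_pos_of_norm_pos; lra).
      replace (1 + - c * / a y) with ((a y - c) * / a y) by (field; lra).
      rewrite Rabs_mult, (Rabs_right (/ a y)) by (apply Rle_ge; left; apply Rinv_0_lt_compat, Hay).
      apply Rmult_le_compat_r; [left; apply Rinv_0_lt_compat, Hay | apply Hc, Hy].
    - rewrite cond_mean_scal. apply Rmult_le_compat_l; [exact HK | apply cond_mean_inv_a_le; lra]. }
  assert (Hcv : Un_cv (fun n => hit_le a r n x - c * v n) (L - c * / a x)).
  { apply CV_minus; [exact HL|].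
    apply CV_mult; [apply Un_cv_const | apply cond_mean_inv_a_cv; lra]. }
  pose proof (Un_cv_Rabs_le _ _ _ Hcv Hbound) as Hlim.
  replace (a x * L - c) with (a x * (L - c * / a x)) by (field; lra).
  rewrite Rabs_mult, (Rabs_right (a x)) by lra.
  apply Rle_trans with (a x * (K * / a x)); [apply Rmult_le_compat_l; lra | right; field; lra].
Qed.

End Potential_kernel.

Theorem lemma3p4 :
  forall (a : pt -> R) (g : R),
    is_potential_kernel a -> is_gamma' a g ->
    exists C : R,
      forall (r : R) (x : pt), 1 <= r -> r + 1 <= norm x ->
        exists L : R,
          Un_cv (fun n => hit_le a r n x) L /\
          exists e : R, Rabs e <= C / r /\
            1 - L = 1 - (a_real g r + e) / a x.
Proof.
  intros a g Ha Hg.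
  destruct (a_annulus_bound a g Hg) as [K [HK0 HK]]. exists K.
  intros r x Hr Hx.
  assert (Hax : 0 < a x) by (apply (a_pos_of_norm_pos a g Ha Hg); lra).
  destruct (hit_le_cv a g Ha Hg r x) as [L HL].
  exists L. split; [exact HL|].
  exists (a x * L - a_real g r). split; [|field; lra].
  apply (hit_limit_close a g Ha Hg r x); auto; try lra.
  unfold Rdiv. apply Rmult_le_pos; [exact HK0 | left; apply Rinv_0_lt_compat; lra].
Qed.
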